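(* Let $Y$ be a simplicial complex on $[n]$, let $\prec$ be a term order, and let $Y^c$ be any combinatorial shifting of $Y$. Then $Y^{\prec}\preceq Y^c$, i.e. for every $k$, either $(Y^{\prec})_k=(Y^c)_k$ or the $\prec$-minimal element of the symmetric difference $(Y^{\prec})_k\,\triangle\,(Y^c)_k$ belongs to $(Y^{\prec})_k$.
   Context: For a simplicial complex $K$ on $[n]$, $K_k$ denotes its set of $k$-element faces. Partial order on $k$-subsets: $\{s_1<\dots<s_k\}\le\{t_1<\dots<t_k\}$ iff $s_i\le t_i$ for all $i$; a term order $\prec$ is, for each $k$, a linear order on $\binom{[n]}{k}$ extending this partial order. Let $X=(x_{ij})$ be an $n\times n$ matrix of independent indeterminates over $\mathbb{Q}$, $C_k(X)$ its $k$-th compound matrix ($c_{S,T}=\det(x_{ij})_{i\in S,j\in T}$). For $\mathcal F\subseteq\binom{[n]}{k}$, the exterior shifting $\mathcal F^{\prec}$ is obtained by going through $\binom{[n]}{k}$ in increasing $\prec$ order and selecting $S$ iff the row of $C_k(X)$ indexed by $S$, restricted to the columns indexed by $\mathcal F$, is linearly independent of previously selected rows; $Y^{\prec}:=\bigcup_k (Y_k)^{\prec}$. A family $\mathcal F$ is shifted if for every $F\in\mathcal F$ and $i<j$ with $j\in F$, $i\notin F$, also $(F\setminus\{j\})\cup\{i\}\in\mathcal F$. For $i<j$, the operation $\mathrm{sh}_{ij}$ on a family $\mathcal F$ replaces each $F\in\mathcal F$ with $j\in F$, $i\notin F$ and $(F\setminus\{j\})\cup\{i\}\notin\mathcal F$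 by $(F\setminus\{j\})\cup\{i\}$, leaving the other members unchanged; applied to a complex it acts on all faces. A combinatorial shifting $Y^c$ is any complex obtained from $Y$ by applying a finite sequence of operations $\mathrm{sh}_{ij}$ ($i<j$) until a shifted complex is reached. *)

From HB Require Import structures.
From mathcomp Require Import all_boot all_order all_algebra.
From mathcomp Require Import fraction.
Set Implicit Arguments. Unset Strict Implicit. Unset Printing Implicit Defensive.
Import Order.TTheory GRing.Theory Num.Theory.

Fixpoint mpoly (m : nat) : idomainType :=
  if m is m'.+1 then ({poly mpoly m'} : idomainType) else (rat : idomainType).

Fixpoint mvar (m v : nat) : mpoly m :=
  if m is m'.+1 return mpoly m then
    (if v == m' then 'X%R else ((mvar m' v)%:P)%R : {poly mpoly m'})
  else 0%R.

Definition ratfun (n : nat) : fieldType := {fraction mpoly (n * n)}.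

(* X = (x_ij) : entry x_ij is the indeterminate number i*n+j, as a rational function *)
Definition xvar (n i j : nat) : ratfun n := tofrac (mvar (n * n) (i * n + j)).

Definition elems n (A : {set 'I_n}) : seq nat := sort leq [seq val i | i <- enum A].

Definition comp_le n (A B : {set 'I_n}) : bool := all2 leq (elems A) (elems B).

Definition ksets n (k : nat) : seq {set 'I_n} := filter (fun A : {set 'I_n} => #|A| == k) (enum [set: {set 'I_n}]).

Definition term_order n (le : nat -> rel {set 'I_n}) : Prop :=
  forall k,
  [/\ {in ksets n k, reflexive (le k)},
      {in ksets n k &, antisymmetric (le k)},
      {in ksets n k & &, transitive (le k)},
      {in ksets n k &, total (le k)} &
      {in ksets n k &, forall A B, comp_le A B -> le k A B}].

Definition compound n k (A B : {set 'I_n}) : ratfun n :=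
  \det (\matrix_(a < k, b < k) xvar n (nth 0%N (elems A) a) (nth 0%N (elems B) b)).

(* the row of C_k(X) indexed by A, restricted to the columns indexed by F *)
Definition crow n k (F : {set {set 'I_n}}) (A : {set 'I_n}) : 'rV[ratfun n]_#|F| :=
  \row_(j < #|F|) compound k A (enum_val j).

Definition crows n k (F : {set {set 'I_n}}) (acc : seq {set 'I_n})
  : 'M[ratfun n]_(size acc, #|F|) :=
  \matrix_(i < size acc) crow k F (nth set0 acc i).

Fixpoint greedy n k (F : {set {set 'I_n}}) (l acc : seq {set 'I_n}) : seq {set 'I_n} :=
  if l is A :: l' then
    if row_free (col_mx (crows k F acc) (crow k F A))
    then greedy k F l' (rcons acc A) else greedy k F l' acc
  else acc.

Definition ext_shift_k n (le : nat -> rel {set 'I_n}) k (F : {set {set 'I_n}})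
  : {set {set 'I_n}} :=
  [set A in greedy k F (sort (le k) (ksets n k)) [::]].

Definition level n (K : {set {set 'I_n}}) k : {set {set 'I_n}} :=
  [set A in K | #|A| == k].

Definition ext_shift n (le : nat -> rel {set 'I_n}) (Y : {set {set 'I_n}})
  : {set {set 'I_n}} :=
  \bigcup_(k < n.+1) ext_shift_k le k (level Y k).

Definition simplicial_complex n (K : {set {set 'I_n}}) : Prop :=
  forall A B : {set 'I_n}, A \in K -> B \subset A -> B \in K.

Definition shifted n (F : {set {set 'I_n}}) : Prop :=
  forall (A : {set 'I_n}) (i j : 'I_n), A \in F -> i < j -> j \in A -> i \notin A ->
    i |: (A :\ j) \in F.

Definition sh n (i j : 'I_n) (F : {set {set 'I_n}}) : {set {set 'I_n}} :=
  [set (if [&& j \in A, i \notin A & i |: (A :\ j) \notin F] then i |: (A :\ j) else A)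
  | A : {set 'I_n} in F].

Definition comb_shifting n (Y Yc : {set {set 'I_n}}) : Prop :=
  exists s : seq ('I_n * 'I_n),
    [/\ all (fun p : 'I_n * 'I_n => p.1 < p.2) s,
        Yc = foldl (fun F (p : 'I_n * 'I_n) => sh p.1 p.2 F) Y s &
        shifted Yc].

Definition prec_le_k n (le : nat -> rel {set 'I_n}) k (A B : {set {set 'I_n}}) : bool :=
  let D := (level A k :\: level B k) :|: (level B k :\: level A k) in
  (level A k == level B k) ||
  [exists U in D, [forall V in D, le k U V] && (U \in level A k)].

(* Fix k, let F := Y_k, E := (Y^≺)_k and G := (Y^c)_k = sh_s(F), and let U be
   the ≺-least set in E △ G. The sets the greedy algorithm selects before U lie
   outside E △ G, hence in G; so if U were in G \ E, the rows of C_k(X) indexed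
   by them and by U would be dependent. This is impossible once the rows
   indexed by G, restricted to the columns F, are independent, i.e. once
   det (c_{S,T}) <> 0 for S in sh_s(F), T in F.
   Under the substitution x_rj := x_rj + t x_ri the minor c_{S,T} becomes
   c_{S,T} ± t c_{S,T-j+i} when j is in T and i is not. After row operations
   the determinant is a polynomial in t whose coefficient of t^m, m the number
   of sets moved by sh_ij, is up to sign the same determinant with F replaced
   by sh_ij(F). Induction on the shift sequence thus gives a specialization of
   X at which the determinant does not vanish. *)
From HB Require Import structures.
From mathcomp Require Import all_boot all_order all_algebra fraction zify.
From mathcomp Require Import fingroup perm.
Set Implicit Arguments. Unset Strict Implicit. Unset Printing Implicit Defensive.
Import Order.TTheory GRing.Theory Num.Theory.
Local Open Scope ring_scope.

Section LinearPencil.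
Variable R : comNzRingType.

Lemma coef_prod_linear (I : eqType) (r : seq I) (P : pred I) (c u : I -> R) :
  (forall a, ~~ P a -> u a = 0) ->
  (size (\prod_(a <- r) ((c a)%:P + 'X * (u a)%:P))%R <= (count P r).+1)%N /\
  (\prod_(a <- r) ((c a)%:P + 'X * (u a)%:P))`_(count P r) =
     \prod_(a <- r) (if P a then u a else c a).
Proof.
move=> Pu; elim: r => [|a r [IHs IHc]]; first by rewrite !big_nil size_poly1 coefC.
rewrite !big_cons /=; set q := \prod_(_ <- r) _ in IHs IHc *.
case Pa: (P a) => /=; last first.
  rewrite add0n Pu ?Pa // mulr0 addr0 coefCM IHc; split => //.
  by rewrite mul_polyC (leq_trans (size_scale_leq _ _)).
have size_lin : (size ((c a)%:P + 'X * (u a)%:P)%R <= 2)%N.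
  apply: leq_trans (size_polyD _ _) _; rewrite geq_max size_polyC (leq_trans (leq_b1 _)) //=.
  by rewrite mulrC mul_polyC (leq_trans (size_scale_leq _ _)) // size_polyX.
split; first by apply: leq_trans (size_polyMleq _ _) _; move: size_lin IHs; lia.
rewrite mulrDl coefD coefCM -mulrA coefXM /= coefCM add0n IHc.
by rewrite add1n nth_default ?mulr0 ?add0r.
Qed.

Lemma coef_det_linear N (C B : 'M[R]_N) (P : pred 'I_N) :
  (forall a b, ~~ P a -> B a b = 0) ->
  (\det (map_mx polyC C + 'X *: map_mx polyC B))`_#|P| =
  \det (\matrix_(a, b) if P a then B a b else C a b).
Proof.
move=> PB; rewrite /determinant coef_sum; apply: eq_bigr => s _.
rewrite -[(-1) ^+ _ : {poly R}](rmorph_sign (@polyC R)) coefCM; congr (_ * _).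
have [_ coef_top] := @coef_prod_linear _ (index_enum 'I_N) P (fun a => C a (s a))
  (fun a => B a (s a)) (fun a => PB a (s a)).
have -> : #|P| = count P (index_enum 'I_N).
  by rewrite cardE /enum_mem size_filter /index_enum; congr count; rewrite unlock.
rewrite (eq_bigr (fun a => if P a then B a (s a) else C a (s a))) => [|a _]; last by rewrite mxE.
rewrite -coef_top; congr _`_ _.
rewrite (eq_bigr (fun a => (C a (s a))%:P + 'X * (B a (s a))%:P)) // => a _; rewrite !mxE.
by case: (boolP (P a)) => // nPa; rewrite PB // mulr0 addr0.
Qed.

Lemma det_add_row_multiples N (A A0 : 'M[R]_N) (Q : pred 'I_N)
    (p : 'I_N -> 'I_N) (c : 'I_N -> R) :
  (forall a, Q a -> ~~ Q (p a)) ->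
  (forall a, ~~ Q a -> row a A = row a A0) ->
  (forall a, Q a -> row a A = row a A0 + c a *: row (p a) A0) ->
  \det A = \det A0.
Proof.
have [m] := ubnP #|Q|; elim: m Q A => // m IH Q A ltQ Q_p rowA_nQ rowA_Q.
have entryE (M : 'M[R]_N) a b v : row a M = v -> M a b = v 0 b.
  by move=> <-; rewrite mxE.
case: (pickP Q) => [a Qa|Q0]; last first.
  by congr (\det _); apply/row_matrixP => r; rewrite rowA_nQ // Q0.
have npa : p a != a by apply: contraNneq (Q_p a Qa) => ->.
pose A1 := \matrix_(r, col) (if r == a then A0 r col else A r col).
pose C := \matrix_(r, col) (if r == a then A0 (p a) col else A r col).
have -> : \det A = 1 * \det A1 + c a * \det C.
  apply: (@determinant_multilinear _ _ _ _ _ a).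
  - rewrite rowA_Q // scale1r; congr (_ + _ *: _); apply/rowP => col; rewrite !mxE ?eqxx //.
  - by apply/matrixP => r col; rewrite !mxE eq_sym (negPf (neq_lift a r)).
  - by apply/matrixP => r col; rewrite !mxE eq_sym (negPf (neq_lift a r)).
have -> : \det C = 0.
  apply: (@determinant_alternate _ _ C a (p a)); first by rewrite eq_sym.
  by move=> col; rewrite !mxE eqxx (negPf npa) (entryE _ _ _ _ (rowA_nQ _ (Q_p a Qa))) mxE.
rewrite mul1r mulr0 addr0.
apply: (IH [pred x | (x != a) && Q x]) => [|r /andP[_ Qr]|r|r /andP[nra Qr]].
- by move: ltQ; rewrite [X in (X < _)%N](cardD1 a) [a \in Q]Qa add1n ltnS.
- by apply/negP => /andP[_]; apply/negP; exact: Q_p.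
- rewrite inE negb_and negbK; have [->|nra] /= := eqVneq r a => Qr; apply/rowP => col.
    by rewrite !mxE eqxx.
  by rewrite !mxE (negPf nra) (entryE _ _ _ _ (rowA_nQ _ Qr)) mxE.
- by apply/rowP => col; rewrite !mxE (negPf nra) (entryE _ _ _ _ (rowA_Q _ Qr)) !mxE.
Qed.

End LinearPencil.

Section Elems.
Variable n : nat.
Implicit Types (T : {set 'I_n}).

Lemma size_elems T : size (elems T) = #|T|.
Proof. by rewrite /elems size_sort size_map cardE. Qed.

Lemma uniq_elems T : uniq (elems T).
Proof. by rewrite /elems sort_uniq map_inj_uniq ?enum_uniq //; exact: val_inj. Qed.

Lemma mem_elems T (i : 'I_n) : (val i \in elems T) = (i \in T).
Proof. by rewrite /elems mem_sort mem_map ?mem_enum //; exact: val_inj. Qed.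

Lemma mem_elemsP T x : reflect (exists2 i : 'I_n, i \in T & x = val i) (x \in elems T).
Proof.
apply: (iffP idP) => [|[i iT ->]]; last by rewrite mem_elems.
by rewrite /elems mem_sort => /mapP[i iT ->]; exists i; rewrite // -mem_enum.
Qed.

Lemma elems_ltn T x : x \in elems T -> (x < n)%N.
Proof. by case/mem_elemsP => i _ ->; exact: ltn_ord. Qed.

Lemma mem_nth_elems T b : (b < #|T|)%N -> nth 0%N (elems T) b \in elems T.
Proof. by move=> lt; rewrite mem_nth ?size_elems. Qed.

Lemma index_elems_ltn T (i : 'I_n) : i \in T -> (index (val i) (elems T) < #|T|)%N.
Proof. by rewrite -size_elems index_mem mem_elems. Qed.

End Elems.

(* [compound k S T] is [minor (xvar n) k S T] by conversion. *)
Definition minor (R : comNzRingType) n (f : nat -> nat -> R) k (S T : {set 'I_n}) : R :=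
  \det (\matrix_(a < k, b < k) f (nth 0%N (elems S) a) (nth 0%N (elems T) b)).

Lemma minor_map (R R' : comNzRingType) (phi : {rmorphism R -> R'}) n (f : nat -> nat -> R) k
    (S T : {set 'I_n}) :
  minor (fun r c => phi (f r c)) k S T = phi (minor f k S T).
Proof. by rewrite /minor -det_map_mx; congr (\det _); apply/matrixP => a b; rewrite !mxE. Qed.

Lemma eq_minor (R : comNzRingType) n (f g : nat -> nat -> R) k (S T : {set 'I_n}) :
  (forall r c, (r < n)%N -> (c < n)%N -> f r c = g r c) -> #|S| = k -> #|T| = k ->
  minor f k S T = minor g k S T.
Proof.
move=> fg Sk Tk; rewrite /minor; congr (\det _); apply/matrixP => a b; rewrite !mxE fg //.
  by apply: (@elems_ltn _ S); apply: mem_nth_elems; rewrite Sk.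
by apply: (@elems_ltn _ T); apply: mem_nth_elems; rewrite Tk.
Qed.

Lemma minor_delta n k (S T : {set 'I_n}) : #|S| = k -> #|T| = k ->
  minor (fun r c => ((r == c)%:R : rat)) k S T = (S == T)%:R.
Proof.
move=> Sk Tk; have [<-|nST] := eqVneq S T.
  rewrite /minor -[RHS](det1 _ k); congr (\det _); apply/matrixP => a b; rewrite !mxE.
  by rewrite nth_uniq ?uniq_elems ?size_elems ?Sk.
have [x xS xT] : exists2 x, x \in S & x \notin T.
  apply/exists_inP; apply: contraNT nST; rewrite negb_exists_in => /forall_inP ST.
  rewrite eqEcard Sk Tk leqnn andbT; apply/subsetP => x xS.
  by have := ST x xS; rewrite negbK.
have ax := index_elems_ltn xS; rewrite Sk in ax.
rewrite /minor (expand_det_row _ (Ordinal ax)) big1 // => b _.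
rewrite !mxE nth_index ?mem_elems //; case: eqP => [xb|]; last by rewrite mul0r.
have := mem_nth_elems (T := T) (b := b); rewrite Tk ltn_ord -xb mem_elems => /(_ isT) xT'.
by rewrite xT' in xT.
Qed.

Section ShiftMap.
Variables (n : nat) (i j : 'I_n) (F : {set {set 'I_n}}).

Definition shmap (A : {set 'I_n}) : {set 'I_n} :=
  if [&& j \in A, i \notin A & i |: (A :\ j) \notin F] then i |: (A :\ j) else A.

Lemma shE : sh i j F = [set shmap A | A in F].
Proof. by []. Qed.

Lemma card_swap (A : {set 'I_n}) : j \in A -> i \notin A -> #|i |: (A :\ j)| = #|A|.
Proof. by move=> jA iA; rewrite cardsU1 !inE (negPf iA) andbF add1n (cardsD1 j A) jA. Qed.

Lemma card_shmap A : #|shmap A| = #|A|.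
Proof. by rewrite /shmap; case: and3P => // [[jA iA _]]; rewrite card_swap. Qed.

Lemma shmap_inj : {in F &, injective shmap}.
Proof.
have swap_inj (A B : {set 'I_n}) : j \in A -> i \notin A -> j \in B -> i \notin B ->
    i |: (A :\ j) = i |: (B :\ j) -> A = B.
  move=> jA iA jB iB /setP AB; apply/setP => x; have := AB x; rewrite !inE.
  have [->|nxj] := eqVneq x j; first by rewrite jA jB.
  by have [->|nxi] := eqVneq x i; rewrite /= ?(negPf iA) ?(negPf iB).
move=> A B AF BF; rewrite /shmap.
case: and3P => [[jA iA nA]|nA]; case: and3P => [[jB iB nB]|nB] //.
- exact: swap_inj.
- by move=> AB; rewrite AB BF in nA.
- by move=> AB; rewrite -AB AF in nB.
Qed.

End ShiftMap.

Definition shift_mx (R : comNzRingType) (f : nat -> nat -> R) (i j : nat) :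
    nat -> nat -> {poly R} :=
  fun r c => (f r c)%:P + (if c == j then 'X * (f r i)%:P else 0).

Section ShiftMinor.
Variables (R : comNzRingType) (n : nat) (f : nat -> nat -> R) (k : nat) (i j : 'I_n).
Implicit Types (S T : {set 'I_n}).

Let replace_j (x : nat) : nat := if x == val j then val i else x.

Let minor_mx_ij S T : 'M[R]_k :=
  \matrix_(a < k, b < k) f (nth 0%N (elems S) a) (replace_j (nth 0%N (elems T) b)).

Lemma minor_shift_mx_notin S T : #|T| = k -> j \notin T ->
  minor (shift_mx f i j) k S T = (minor f k S T)%:P.
Proof.
move=> Tk jT; rewrite -(minor_map (@polyC R)); congr (\det _); apply/matrixP => a b.
rewrite !mxE /shift_mx; case: eqP => [jb|]; last by rewrite addr0.
have := mem_nth_elems (T := T) (b := b); rewrite Tk ltn_ord jb mem_elems => /(_ isT) jT'.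
by rewrite jT' in jT.
Qed.

Lemma minor_shift_mx_in S T : #|T| = k -> j \in T ->
  minor (shift_mx f i j) k S T = (minor f k S T)%:P + 'X * (\det (minor_mx_ij S T))%:P.
Proof.
move=> Tk jT; have bj_lt := index_elems_ltn jT; rewrite Tk in bj_lt.
pose bj : 'I_k := Ordinal bj_lt.
have nth_j (b : 'I_k) : (nth 0%N (elems T) b == val j) = (b == bj).
  apply/eqP/eqP => [bj_eq|->]; last by rewrite /= nth_index ?mem_elems.
  by apply/val_inj; rewrite /= -bj_eq index_uniq ?uniq_elems ?size_elems ?Tk.
pose M0 := \matrix_(a < k, b < k) f (nth 0%N (elems S) a) (nth 0%N (elems T) b).
rewrite /minor -det_tr.
rewrite (@determinant_multilinear _ _ _ (map_mx polyC M0)^T (map_mx polyC (minor_mx_ij S T))^T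
  bj 1 'X); first by rewrite !det_tr !det_map_mx mul1r.
- apply/rowP => a; rewrite !mxE /shift_mx /replace_j.
  have /eqP -> : nth 0%N (elems T) bj == val j by rewrite nth_j.
  by rewrite !eqxx mul1r.
- apply/matrixP => r a; rewrite !mxE /shift_mx.
  have /negPf -> : nth 0%N (elems T) (lift bj r) != val j by rewrite nth_j eq_sym neq_lift.
  by rewrite addr0.
- apply/matrixP => r a; rewrite !mxE /shift_mx /replace_j.
  have /negPf -> : nth 0%N (elems T) (lift bj r) != val j by rewrite nth_j eq_sym neq_lift.
  by rewrite addr0.
Qed.

Lemma det_minor_mx_ij_in S T : i != j -> #|T| = k -> i \in T -> j \in T ->
  \det (minor_mx_ij S T) = 0.
Proof.
move=> nij Tk iT jT; have bj_lt := index_elems_ltn jT; have bi_lt := index_elems_ltn iT.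
rewrite Tk in bi_lt bj_lt.
rewrite -det_tr; apply: (@determinant_alternate _ _ _ (Ordinal bj_lt) (Ordinal bi_lt)).
  rewrite -val_eqE /=; apply/negP => /eqP/(congr1 (nth 0%N (elems T))).
  by rewrite !nth_index ?mem_elems // => /val_inj/eqP; rewrite eq_sym (negPf nij).
move=> a; rewrite !mxE /replace_j !nth_index ?mem_elems // eqxx.
by case: eqP => // /val_inj ij; rewrite ij eqxx in nij.
Qed.

(* Replacing [j] by [i] in the columns of [T] permutes the columns of
   [i |: T :\ j], independently of the rows [S]. *)
Lemma det_minor_mx_ij_notin T : #|T| = k -> i \notin T -> j \in T ->
  exists b : bool, forall S, \det (minor_mx_ij S T) = (-1) ^+ b * minor f k S (i |: T :\ j).
Proof.
move=> Tk iT jT; set T' := i |: T :\ j.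
have T'k : #|T'| = k by rewrite card_swap.
have memT b : nth 0%N (elems T) b \in elems T -> replace_j (nth 0%N (elems T) b) \in elems T'.
  case/mem_elemsP => x xT ->; rewrite /replace_j val_eqE.
  case: eqP => [_|nxj]; first by rewrite mem_elems !inE eqxx.
  by rewrite mem_elems !inE xT andbT; apply/orP; right; apply/eqP.
have g_lt (b : 'I_k) : (index (replace_j (nth 0%N (elems T) b)) (elems T') < k)%N.
  by rewrite [X in (_ < X)%N](esym T'k) -size_elems index_mem memT // mem_nth_elems ?Tk.
pose g (b : 'I_k) : 'I_k := Ordinal (g_lt b).
have g_inj : injective g.
  move=> b b' /(congr1 val) /= /(congr1 (nth 0%N (elems T'))).
  rewrite !nth_index ?memT ?mem_nth_elems ?Tk // /replace_j.
  have notin_i (x : nat) : x \in elems T -> x != val i.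
    by apply: contraTneq => ->; rewrite mem_elems.
  have mT (c : 'I_k) : nth 0%N (elems T) c \in elems T by rewrite mem_nth_elems ?Tk.
  move=> e; apply/val_inj/eqP.
  rewrite -(nth_uniq 0%N _ _ (uniq_elems T)) ?size_elems ?Tk ?ltn_ord //; apply/eqP; move: e.
  case: eqP => [->|_]; case: eqP => [->|_] // e.
    by move: (notin_i _ (mT b')); rewrite -e eqxx.
  by move: (notin_i _ (mT b)); rewrite e eqxx.
exists (odd_perm (perm g_inj)^-1)%g => S.
have -> : minor_mx_ij S T = col_perm (perm g_inj)
    (\matrix_(a < k, b < k) f (nth 0%N (elems S) a) (nth 0%N (elems T') b)).
  by apply/matrixP => a b; rewrite !mxE permE /= nth_index ?memT ?mem_nth_elems ?Tk.
by rewrite col_permE det_mulmx det_perm mulrC.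
Qed.

Lemma minor_shift_mx T : i != j -> #|T| = k ->
  exists b : bool, forall S, minor (shift_mx f i j) k S T = (minor f k S T)%:P +
    (if (j \in T) && (i \notin T) then 'X * ((-1) ^+ b * minor f k S (i |: T :\ j))%:P else 0).
Proof.
move=> nij Tk; have [jT|jT] /= := boolP (j \in T); last first.
  by exists false => S; rewrite minor_shift_mx_notin ?addr0.
have [iT|iT] /= := boolP (i \in T).
  by exists false => S; rewrite minor_shift_mx_in // det_minor_mx_ij_in ?mulr0 ?addr0.
have [b Eb] := det_minor_mx_ij_notin Tk iT jT.
by exists b => S; rewrite minor_shift_mx_in // Eb.
Qed.

End ShiftMinor.

(* The [b]-th member of [sh_seq s fs] is the image of the [b]-th member of [fs]. *)
Fixpoint sh_seq n (s : seq ('I_n * 'I_n)) (fs : seq {set 'I_n}) : seq {set 'I_n} :=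
  if s is p :: s' then sh_seq s' (map (shmap p.1 p.2 [set A in fs]) fs) else fs.

Section ShiftSeq.
Variables (n k : nat).
Implicit Types (s : seq ('I_n * 'I_n)) (fs : seq {set 'I_n}).

Lemma size_sh_seq s fs : size (sh_seq s fs) = size fs.
Proof. by elim: s fs => //= p s IH fs; rewrite IH size_map. Qed.

Lemma cards_sh_seq s fs :
  all (fun A : {set 'I_n} => #|A| == k) fs ->
  all (fun A : {set 'I_n} => #|A| == k) (sh_seq s fs).
Proof.
elim: s fs => //= p s IH fs cards_fs; apply: IH.
by apply/allP => A /mapP[B B_fs ->]; rewrite card_shmap; exact: (allP cards_fs).
Qed.

Lemma sh_seq_set s fs :
  [set A in sh_seq s fs] = foldl (fun F (p : 'I_n * 'I_n) => sh p.1 p.2 F) [set A in fs] s.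
Proof.
elim: s fs => //= p s IH fs; rewrite IH; congr foldl.
apply/setP => A; rewrite shE inE; apply/mapP/imsetP => [[B B_fs ->]|[B]].
  by exists B; rewrite ?inE.
by rewrite inE => B_fs ->; exists B.
Qed.

End ShiftSeq.

Section ShiftStep.
Variables (R : idomainType) (n k N : nat) (f : nat -> nat -> R) (i j : 'I_n).
Variables (fs gs : seq {set 'I_n}) (sgn : 'I_N -> bool).
Hypothesis size_fs : size fs = N.

Let Fs := [set A in fs].
Let T (a : 'I_N) := nth set0 fs a.
Let G (b : 'I_N) := nth set0 gs b.
Let moved a := [&& j \in T a, i \notin T a & i |: (T a :\ j) \notin Fs].
Let blocked a := [&& j \in T a, i \notin T a & i |: (T a :\ j) \in Fs].

Hypothesis minor_shift_T : forall a S, minor (shift_mx f i j) k S (T a) =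
  (minor f k S (T a))%:P +
  (if (j \in T a) && (i \notin T a) then 'X * ((-1) ^+ sgn a * minor f k S (i |: T a :\ j))%:P
   else 0).

Let C := \matrix_(a < N, b < N) minor f k (G b) (T a).
Let B := \matrix_(a < N, b < N)
  (if moved a then (-1) ^+ sgn a * minor f k (G b) (i |: (T a :\ j)) else 0).

(* A blocked row loses its [t]-part by subtracting a multiple of the row of
   its (unmoved) partner [i |: T a :\ j]. *)
Lemma det_minor_shift_mx_pencil :
  \det (\matrix_(a < N, b < N) minor (shift_mx f i j) k (G b) (T a)) =
  \det (map_mx polyC C + 'X *: map_mx polyC B).
Proof.
have [p Tp] : exists p : 'I_N -> 'I_N, forall a, blocked a -> T (p a) = i |: (T a :\ j).
  apply: (@fin_all_exists _ (fun _ => 'I_N)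
    (fun a (a' : 'I_N) => blocked a -> T a' = i |: (T a :\ j))) => a.
  have [/and3P[_ _]|_] := boolP (blocked a); last by exists a.
  rewrite inE -index_mem size_fs => lt; exists (Ordinal lt) => _.
  by rewrite /T nth_index // -index_mem size_fs.
apply: (@det_add_row_multiples _ _ _ _ blocked p (fun a => 'X * ((-1) ^+ sgn a)%:P)).
- by move=> a /Tp Tpa; apply/negP => /and3P[_]; rewrite Tpa !inE eqxx.
- move=> a not_blocked; apply/rowP => b; rewrite !mxE minor_shift_T /moved.
  move: not_blocked; rewrite /blocked.
  have [jT|jT] /= := boolP (j \in T a); last by rewrite polyC0 mulr0.
  have [iT|iT] /= := boolP (i \in T a); first by rewrite polyC0 mulr0.
  by move=> ->.
- move=> a blocked_a; apply/rowP => b; have /and3P[jT iT TF] := blocked_a.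
  rewrite !mxE minor_shift_T /moved jT iT TF /= Tp // setU11 andbF /= polyC0 !mulr0 !addr0.
  by rewrite polyCM mulrA.
Qed.

Lemma det_minor_shift_mx_neq0_of_signs :
  \det (\matrix_(a < N, b < N) minor f k (G b) (nth set0 (map (shmap i j Fs) fs) a)) != 0 ->
  \det (\matrix_(a < N, b < N) minor (shift_mx f i j) k (G b) (T a)) != 0.
Proof.
move=> det_sh_neq0; rewrite det_minor_shift_mx_pencil; apply: contra_neq det_sh_neq0 => det0.
have B_moved a b : ~~ moved a -> B a b = 0 by move=> /negPf Ma; rewrite mxE Ma.
have := coef_det_linear C B_moved; rewrite det0 coef0 => /esym/eqP.
have -> : \matrix_(a, b) (if moved a then B a b else C a b) =
    diag_mx (\row_a (if moved a then (-1) ^+ sgn a else 1)) *m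
    \matrix_(a < N, b < N) minor f k (G b) (nth set0 (map (shmap i j Fs) fs) a).
  apply/matrixP => a b; rewrite mul_diag_mx !mxE (nth_map set0) ?size_fs // /shmap.
  by rewrite -/(T a) -/(moved a); case: (moved a); rewrite ?mul1r.
rewrite det_mulmx det_diag mulf_eq0 => /orP[|/eqP //].
rewrite prodf_seq_eq0 => /hasP[a _]; rewrite mxE.
by case: (moved a); rewrite ?signr_eq0 ?oner_eq0.
Qed.

End ShiftStep.

Lemma det_minor_shift_mx_neq0 (R : idomainType) n k N (f : nat -> nat -> R) (i j : 'I_n)
    (fs gs : seq {set 'I_n}) :
  i != j -> all (fun A : {set 'I_n} => #|A| == k) fs -> size fs = N ->
  \det (\matrix_(a < N, b < N)
    minor f k (nth set0 gs b) (nth set0 (map (shmap i j [set A in fs]) fs) a)) != 0 ->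
  \det (\matrix_(a < N, b < N) minor (shift_mx f i j) k (nth set0 gs b) (nth set0 fs a)) != 0.
Proof.
move=> nij cards_fs size_fs.
have /fin_all_exists[sgn Esgn] : forall a : 'I_N, exists sgn : bool, forall S,
    minor (shift_mx f i j) k S (nth set0 fs a) = (minor f k S (nth set0 fs a))%:P +
    (if (j \in nth set0 fs a) && (i \notin nth set0 fs a)
     then 'X * ((-1) ^+ sgn * minor f k S (i |: nth set0 fs a :\ j))%:P else 0).
  move=> a; apply: minor_shift_mx => //.
  by apply/eqP/(allP cards_fs)/mem_nth; rewrite size_fs.
exact: det_minor_shift_mx_neq0_of_signs Esgn.
Qed.

Lemma exists_minor_mx_sh_seq_neq0 n k (s : seq ('I_n * 'I_n)) :
  all (fun p => p.1 != p.2) s ->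
  forall fs : seq {set 'I_n}, uniq fs -> all (fun A : {set 'I_n} => #|A| == k) fs ->
  forall N, size fs = N ->
  exists m (f : nat -> nat -> mpoly m),
    \det (\matrix_(a < N, b < N) minor f k (nth set0 (sh_seq s fs) b) (nth set0 fs a)) != 0.
Proof.
elim: s => [|[i j] s IH] /= => [_|/andP[nij neq_s]] fs uniq_fs cards_fs N size_fs.
  exists 0%N, (fun r c => ((r == c)%:R : rat)).
  rewrite (_ : \matrix_(a < N, b < N) _ = 1%:M) ?det1 ?oner_neq0 //.
  apply/matrixP => a b; rewrite !mxE minor_delta ?nth_uniq ?size_fs 1?eq_sym //.
    by apply/eqP/(allP cards_fs)/mem_nth; rewrite size_fs.
  by apply/eqP/(allP cards_fs)/mem_nth; rewrite size_fs.
set fs' := map (shmap i j [set A in fs]) fs.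
have uniq_fs' : uniq fs'.
  by rewrite map_inj_in_uniq // => A B A_fs B_fs; apply: shmap_inj; rewrite inE.
have cards_fs' : all (fun A : {set 'I_n} => #|A| == k) fs'.
  by apply/allP => A /mapP[B B_fs ->]; rewrite card_shmap; exact: (allP cards_fs).
have [m [f det_neq0]] := IH neq_s fs' uniq_fs' cards_fs' N (etrans (size_map _ _) size_fs).
by exists m.+1, (shift_mx f i j); apply: det_minor_shift_mx_neq0.
Qed.

Fixpoint mpoly_const (p : nat) : {rmorphism rat -> mpoly p} :=
  if p is p'.+1 return {rmorphism rat -> mpoly p} then
    ((@polyC (mpoly p')) \o mpoly_const p')%FUN : {rmorphism rat -> {poly mpoly p'}}
  else idfun.

Fixpoint mpoly_eval (p m : nat) (g : nat -> mpoly p) : {rmorphism mpoly m -> mpoly p} :=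
  if m is m'.+1 return {rmorphism mpoly m -> mpoly p} then
    @horner_morph _ _ (mpoly_eval m' g) (g m') (fun a => mulrC _ _)
  else mpoly_const p.

Lemma mpoly_eval_var p m (g : nat -> mpoly p) v : (v < m)%N -> mpoly_eval m g (mvar m v) = g v.
Proof.
elim: m => // m IH; rewrite ltnS leq_eqVlt => /orP[/eqP->|lt].
  by rewrite /= eqxx horner_morphX.
by rewrite /= ifN ?horner_morphC ?IH // neq_ltn lt.
Qed.

(* The generic minors specialize to the minors of any [f], so the generic
   determinant cannot vanish. *)
Lemma det_compound_sh_seq_neq0 n k (s : seq ('I_n * 'I_n)) (fs : seq {set 'I_n}) N :
  all (fun p => p.1 != p.2) s -> uniq fs -> all (fun A : {set 'I_n} => #|A| == k) fs ->
  size fs = N ->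
  \det (\matrix_(a < N, b < N) compound k (nth set0 (sh_seq s fs) a) (nth set0 fs b)) != 0.
Proof.
move=> neq_s uniq_fs cards_fs size_fs.
have [m [f det_f]] := exists_minor_mx_sh_seq_neq0 neq_s uniq_fs cards_fs size_fs.
pose x r c := mvar (n * n) (r * n + c).
have -> : \matrix_(a < N, b < N) compound k (nth set0 (sh_seq s fs) a) (nth set0 fs b) =
    map_mx (@tofrac _)
      (\matrix_(a < N, b < N) minor x k (nth set0 (sh_seq s fs) a) (nth set0 fs b)).
  by apply/matrixP => a b; rewrite !mxE -(minor_map (@tofrac _)).
rewrite det_map_mx tofrac_eq0; apply: contraNneq det_f => det0.
pose g v := f (v %/ n)%N (v %% n)%N.
have := congr1 (mpoly_eval (n * n) g) det0; rewrite rmorph0 -det_map_mx => <-.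
rewrite -det_tr; apply/eqP; congr (\det _); apply/matrixP => a b; rewrite !mxE.
rewrite -minor_map; apply: eq_minor.
- move=> r c rn cn; rewrite mpoly_eval_var /g; last by nia.
  by rewrite divnMDl ?(divn_small cn) ?addn0 ?modnMDl ?modn_small //; lia.
- have /allP cards := cards_sh_seq s cards_fs.
  by apply/eqP/cards/mem_nth; rewrite size_sh_seq size_fs.
- by apply/eqP/(allP cards_fs)/mem_nth; rewrite size_fs.
Qed.

Lemma row_free_rows_inj (K : fieldType) m p N (M : 'M[K]_(m, N)) (M0 : 'M[K]_(p, N))
    (phi : 'I_m -> 'I_p) :
  injective phi -> (forall r, row r M = row (phi r) M0) -> row_free M0 -> row_free M.
Proof.
move=> phi_inj rowM free_M0.
pose P := \matrix_(r < m, c < p) ((phi r == c)%:R : K).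
have -> : M = P *m M0.
  apply/row_matrixP => r; rewrite rowM row_mul; apply/rowP => c; rewrite !mxE.
  rewrite (bigD1 (phi r)) //= big1 ?addr0 => [|c' nc']; first by rewrite !mxE eqxx mul1r.
  by rewrite !mxE eq_sym (negPf nc') mul0r.
have PPt : P *m P^T = 1%:M.
  apply/matrixP => r r'; rewrite !mxE (bigD1 (phi r)) //= big1 ?addr0 => [|c nc].
    by rewrite !mxE eqxx mul1r (inj_eq phi_inj) eq_sym.
  by rewrite !mxE eq_sym (negPf nc) mul0r.
rewrite /row_free mxrankMfree // eqn_leq rank_leq_row /=.
by have := mxrankM_maxl P P^T; rewrite PPt mxrank1.
Qed.

Lemma sorted_split_first (T : eqType) (leT : rel T) (L : seq T) (D : {pred T}) :
  {in L & &, transitive leT} -> {in L, reflexive leT} -> sorted leT L -> has (mem D) L ->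
  exists l1 U l2, [/\ L = l1 ++ U :: l2, U \in D, ~~ has (mem D) l1 &
    {in L, forall V, V \in D -> leT U V}].
Proof.
move=> + + + hasD; case: (split_find hasD) => U l1 l2 DU notD_l1.
rewrite cat_rcons => leT_tr leT_refl sorted_L; exists l1, U, l2; split => // V VL DV.
have UL : U \in l1 ++ U :: l2 by rewrite mem_cat mem_head orbT.
apply: (sorted_leq_index_in leT_tr leT_refl sorted_L) UL VL _.
have notin_l1 x : x \in D -> x \notin l1.
  by move=> Dx; apply: contra notD_l1 => x_l1; apply/hasP; exists x.
rewrite !index_cat (negPf (notin_l1 _ DU)) (negPf (notin_l1 _ DV)) /= eqxx addn0 leq_addr //.
Qed.

Section Greedy.
Variables (n k : nat) (F : {set {set 'I_n}}).
Implicit Types (l acc : seq {set 'I_n}).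

Lemma greedy_cat l1 l2 acc : greedy k F (l1 ++ l2) acc = greedy k F l2 (greedy k F l1 acc).
Proof. by elim: l1 acc => //= A l1 IH acc; case: ifP. Qed.

Lemma greedy_cat_subseq l acc : exists2 s, greedy k F l acc = acc ++ s & subseq s l.
Proof.
elim: l acc => [|A l IH] acc /=; first by exists [::]; rewrite ?cats0.
case: ifP => _; last first.
  by have [s -> sub_s] := IH acc; exists s; last exact: subseq_trans sub_s (subseq_cons l A).
have [s -> sub_s] := IH (rcons acc A); exists (A :: s); first by rewrite cat_rcons.
by rewrite /= eqxx.
Qed.

Lemma subseq_greedy l : subseq (greedy k F l [::]) l.
Proof. by have [s -> sub_s] := greedy_cat_subseq l [::]. Qed.

Lemma greedy_cat_sub l1 l2 acc : {subset greedy k F l1 acc <= greedy k F (l1 ++ l2) acc}.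
Proof.
by move=> A A_l1; rewrite greedy_cat; have [s -> _] := greedy_cat_subseq l2 (greedy k F l1 acc);
  rewrite mem_cat A_l1.
Qed.

Lemma greedy_selects l1 U l2 acc :
  row_free (col_mx (crows k F (greedy k F l1 acc)) (crow k F U)) ->
  U \in greedy k F (l1 ++ U :: l2) acc.
Proof.
move=> free_U; rewrite greedy_cat /= free_U.
by have [s -> _] := greedy_cat_subseq l2 (rcons (greedy k F l1 acc) U);
  rewrite mem_cat mem_rcons mem_head.
Qed.

Lemma row_free_crows_rcons (G : {set {set 'I_n}}) acc U :
  row_free (crows k F (enum G)) -> uniq (rcons acc U) -> {subset rcons acc U <= G} ->
  row_free (col_mx (crows k F acc) (crow k F U)).
Proof.
move=> free_G uniq_AU sub_G; set AU := rcons acc U.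
have size_AU : (size acc + 1 = size AU)%N by rewrite size_rcons addn1.
have phi_lt (r : 'I_(size acc + 1)) : (index (nth set0 AU r) (enum G) < size (enum G))%N.
  by rewrite index_mem mem_enum sub_G // mem_nth // -size_AU.
apply: (@row_free_rows_inj _ _ _ _ _ _ (fun r => Ordinal (phi_lt r))) free_G.
  move=> r r' /(congr1 (fun x : 'I__ => nth set0 (enum G) x)) /=.
  rewrite !nth_index ?mem_enum ?sub_G ?mem_nth -?size_AU //.
  by move/eqP; rewrite nth_uniq -?size_AU // => /eqP/val_inj.
move=> r; rewrite /crows rowK /= nth_index ?mem_enum ?sub_G ?mem_nth -?size_AU //.
case: (splitP r) => [r' r_r'|r' r_r'].
  have -> : r = lshift 1 r' by apply/val_inj.
  by rewrite rowKu rowK /AU nth_rcons /= ltn_ord.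
have -> : r = rshift (size acc) r' by apply/val_inj.
by rewrite rowKd /AU nth_rcons /= ord1 addn0 ltnn eqxx; apply/rowP => c; rewrite !mxE.
Qed.

Lemma greedy_selects_indep (G : {set {set 'I_n}}) l1 U l2 :
  row_free (crows k F (enum G)) -> uniq (l1 ++ U :: l2) ->
  {subset greedy k F l1 [::] <= G} -> U \in G -> U \in greedy k F (l1 ++ U :: l2) [::].
Proof.
move=> free_G uniq_L acc_G G_U; apply: greedy_selects; apply: row_free_crows_rcons free_G _ _.
  have [uniq_l1 U_l1] : uniq l1 /\ U \notin l1.
    by move: uniq_L; rewrite cat_uniq /= => /and3P[-> /norP[]].
  rewrite rcons_uniq (subseq_uniq (subseq_greedy l1)) // andbT.
  by apply: contra U_l1; apply: mem_subseq; apply: subseq_greedy.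
by move=> A; rewrite mem_rcons inE => /orP[/eqP -> | /acc_G].
Qed.

End Greedy.

Section Levels.
Variable n : nat.
Implicit Types (X F : {set {set 'I_n}}).

Lemma card_level X k (A : {set 'I_n}) : A \in level X k -> #|A| = k.
Proof. by rewrite inE => /andP[_ /eqP]. Qed.

Lemma level_gt X k : (n < k)%N -> level X k = set0.
Proof.
move=> ltnk; apply/setP => A; rewrite !inE; apply/negbTE; rewrite negb_and orbC.
by rewrite neq_ltn (leq_ltn_trans _ ltnk) //; apply: leq_trans (max_card _) _; rewrite card_ord.
Qed.

Lemma shmap_level (i j : 'I_n) F k (A : {set 'I_n}) :
  #|A| = k -> shmap i j F A = shmap i j (level F k) A.
Proof.
move=> Ak; rewrite /shmap; have [jA|] //= := boolP (j \in A); have [|iA] //= := boolP (i \in A).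
by rewrite inE card_swap // Ak eqxx andbT.
Qed.

Lemma level_sh (i j : 'I_n) F k : level (sh i j F) k = sh i j (level F k).
Proof.
apply/setP => A; rewrite !shE inE; apply/andP/imsetP => [[/imsetP[B BF ->] cardB]|[B]].
  have Bk : #|B| = k by move/eqP: cardB; rewrite card_shmap.
  by exists B; rewrite ?inE ?BF ?Bk ?eqxx // -shmap_level.
rewrite inE => /andP[BF /eqP Bk] ->; rewrite -shmap_level // card_shmap Bk eqxx.
by split => //; apply/imsetP; exists B.
Qed.

Lemma level_foldl_sh (s : seq ('I_n * 'I_n)) F k :
  level (foldl (fun F (p : 'I_n * 'I_n) => sh p.1 p.2 F) F s) k =
  foldl (fun F (p : 'I_n * 'I_n) => sh p.1 p.2 F) (level F k) s.
Proof. by elim: s F => //= p s IH F; rewrite IH level_sh. Qed.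

Lemma card_ext_shift_k (le : nat -> rel {set 'I_n}) k F (A : {set 'I_n}) :
  A \in ext_shift_k le k F -> #|A| = k.
Proof.
rewrite inE => /(mem_subseq (subseq_greedy _ _ _)).
by rewrite mem_sort mem_filter => /andP[/eqP].
Qed.

Lemma level_ext_shift (le : nat -> rel {set 'I_n}) (Y : {set {set 'I_n}}) k : (k <= n)%N ->
  level (ext_shift le Y) k = ext_shift_k le k (level Y k).
Proof.
move=> kn; apply/setP => A; rewrite inE; apply/andP/idP => [[/bigcupP[k' _ A_k'] /eqP Ak]|A_k].
  by have := card_ext_shift_k A_k'; rewrite Ak => ->.
split; last by rewrite (card_ext_shift_k A_k).
by apply/bigcupP; exists (Ordinal (kn : (k < n.+1)%N)).
Qed.

Lemma row_free_crows_sh k (s : seq ('I_n * 'I_n)) F :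
  all (fun p : 'I_n * 'I_n => (p.1 < p.2)%N) s -> {in F, forall A : {set 'I_n}, #|A| = k} ->
  row_free (crows k F (enum (foldl (fun F (p : 'I_n * 'I_n) => sh p.1 p.2 F) F s))).
Proof.
move=> lt_s cards_F; set G := foldl _ F s; set gs := sh_seq s (enum F).
have size_gs : size gs = #|F| by rewrite size_sh_seq cardE.
have gsG : [set A in gs] = G by rewrite sh_seq_set set_enum.
pose M0 := \matrix_(a < #|F|, b < #|F|) compound k (nth set0 gs a) (nth set0 (enum F) b).
have free_M0 : row_free M0.
  rewrite row_free_unit unitmxE unitfE.
  apply: det_compound_sh_seq_neq0; rewrite ?enum_uniq -?cardE //.
    by apply/allP => p /(allP lt_s); rewrite neq_ltn => ->.
  by apply/allP => A; rewrite mem_enum => /cards_F ->.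
have nth_G (r : 'I_(size (enum G))) : nth set0 (enum G) r \in gs.
  by rewrite -[_ \in gs]inE gsG -mem_enum mem_nth.
have phi_lt (r : 'I_(size (enum G))) : (index (nth set0 (enum G) r) gs < #|F|)%N.
  by rewrite -size_gs index_mem nth_G.
apply: (@row_free_rows_inj _ _ _ _ _ _ (fun r => Ordinal (phi_lt r))) free_M0.
  move=> r r' /(congr1 (fun x : 'I__ => nth set0 gs x)) /=; rewrite !nth_index ?nth_G //.
  by move/eqP; rewrite nth_uniq ?enum_uniq // => /eqP/val_inj.
move=> r; apply/rowP => c; rewrite !mxE /= nth_index ?nth_G //.
by rewrite (enum_val_nth set0).
Qed.

End Levels.

Theorem mainTheorem5 (n : nat) (Y Yc : {set {set 'I_n}})
  (le : nat -> rel {set 'I_n}) :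
  simplicial_complex Y -> term_order le -> comb_shifting Y Yc ->
  forall k : nat, prec_le_k le k (ext_shift le Y) Yc.
Proof.
move=> _ le_order [s [lt_s -> _]] k; rewrite /prec_le_k.
set E := level _ k; set G := level _ k; set D := _ :|: _.
have [EG | neqEG] := eqVneq E G; first by apply/orP; left; apply/eqP.
have le_kn : (k <= n)%N.
  by rewrite leqNgt; apply: contra_neqN neqEG => /level_gt E0; rewrite /E /G !E0.
have [le_refl _ le_trans le_total _] := le_order k.
set F := level Y k; set L := sort (le k) (ksets n k).
have E_greedy : E = [set A in greedy k F L [::]] by rewrite /E level_ext_shift.
have free_G : row_free (crows k F (enum G)).
  by rewrite /G level_foldl_sh; apply: row_free_crows_sh lt_s _ => A /card_level.
have L_ksets : {subset L <= ksets n k} by move=> A; rewrite mem_sort.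
have D_L A : A \in D -> A \in L.
  by rewrite mem_sort mem_filter mem_enum in_setT andbT; case/setUP => /setDP[/card_level -> _].
have hasD : has (mem D) L.
  have [A DA] : exists A, A \in D by apply/set0Pn; rewrite setU_eq0 !setD_eq0 -eqEsubset.
  by apply/hasP; exists A; rewrite ?D_L.
have [l1 [U [l2 [eL DU notD_l1 U_min]]]] := sorted_split_first (sub_in3 L_ksets le_trans)
  (sub_in1 L_ksets le_refl) (sort_sorted_in le_total (allss _)) hasD.
apply/orP; right; apply/exists_inP; exists U => //; apply/andP; split.
  by apply/forall_inP => V DV; apply: U_min; rewrite ?D_L.
have [// | notE_U] := boolP (U \in E); case/negP: (notE_U).
rewrite E_greedy inE eL; apply: greedy_selects_indep free_G _ _ _.
- by rewrite -eL sort_uniq filter_uniq ?enum_uniq.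
- move=> A A_acc; apply: contraR notD_l1 => notG_A; apply/hasP; exists A.
    by apply: mem_subseq A_acc; apply: subseq_greedy.
  by rewrite inE /D in_setU !in_setD notG_A E_greedy inE eL greedy_cat_sub.
- by move: DU; rewrite /D in_setU !in_setD (negbTE notE_U) andbF.
Qed.
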